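(* Let $U$ be the open unit disc in $\mathbb{R}^2$, let $E\subset U$ be open with $M:=\partial E\cap U$ a $C^{1,1}$ curve in $U$, and assume $E\setminus\{0\}=E^{sc}$. Suppose there is $x\in M\setminus\{0\}$ with $x\in H:=\{(x_1,x_2)\in U: x_2>0\}$ and $\sin\sigma(x)=-1$. Then $E$ is not convex.
   Context: For measurable $E\subset U$ and $\tau\in(0,1)$, $L_E(\tau)=\mathscr{H}^1(E\cap\mathbb{S}^1_\tau)$ with $\mathbb{S}^1_\tau$ the centred circle of radius $\tau$; $p(E)=\{\tau: L_E(\tau)>0\}$; $E^{sc}=\bigcup_{\tau\in p(E)}C(\tau,\alpha_\tau)$ where $C(\tau,\alpha)=\{y\in\mathbb{S}^1_\tau:\langle y,e_1\rangle>\tau\cos\alpha\}$ for $\alpha<\pi$, $C(\tau,\pi)=\mathbb{S}^1_\tau$, and $2\alpha_\tau\tau=L_E(\tau)$. For $p\in M$, $n(p)$ is the inner unit normal to $E$ and $t(p)$ is the unit tangent chosen so that $\{t(p),n(p)\}$ is a positively oriented basis of $\mathbb{R}^2$; for $p\neq0$, $\sigma(p)$ is the angle measured anticlockwise from the position vector $p$ to $t(p)$ (defined modulo $2\pi$). *)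

From Stdlib Require Import Reals Lra List ClassicalEpsilon.
Open Scope R_scope.

Definition pt : Type := (R * R)%type.

Definition padd (p q : pt) : pt := (fst p + fst q, snd p + snd q).
Definition psub (p q : pt) : pt := (fst p - fst q, snd p - snd q).
Definition pscal (s : R) (p : pt) : pt := (s * fst p, s * snd p).
Definition dot (p q : pt) : R := fst p * fst q + snd p * snd q.
Definition pnorm (p : pt) : R := sqrt (dot p p).
Definition dist (p q : pt) : R := pnorm (psub p q).

Definition inU (p : pt) : Prop := pnorm p < 1.

Definition open2 (E : pt -> Prop) : Prop :=
  forall p, E p -> exists r, 0 < r /\ forall q, dist p q < r -> E q.

Definition boundary (E : pt -> Prop) (p : pt) : Prop :=
  (forall eps, 0 < eps -> exists q, E q /\ dist p q < eps) /\
  (forall eps, 0 < eps -> exists q, ~ E q /\ dist p q < eps).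

Definition bdryU (E : pt -> Prop) (p : pt) : Prop := boundary E p /\ inU p.

(* M is a C^{1,1} curve: locally (after a rotation) the graph of a C^1
   function with Lipschitz derivative *)
Definition C11_curve (M : pt -> Prop) : Prop :=
  forall p, M p ->
    exists r theta (f f' : R -> R),
      0 < r /\ f 0 = 0 /\
      (forall s, derivable_pt_lim f s (f' s)) /\
      (exists K, forall a b, Rabs (f' a - f' b) <= K * Rabs (a - b)) /\
      forall q, dist p q < r ->
        (M q <-> exists s,
            q = padd p (padd (pscal s (cos theta, sin theta))
                             (pscal (f s) (- sin theta, cos theta)))).

Definition circ (tau t : R) : pt := (tau * cos t, tau * sin t).

Fixpoint intervals_in (A : R -> Prop) (lo : R) (l : list (R * R)) : Prop :=
  match l with
  | nil => True
  | (a, b) :: l' =>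
      lo < a /\ a < b /\ b <= PI /\
      (forall t, a <= t <= b -> A t) /\ intervals_in A b l'
  end.

Fixpoint total_length (l : list (R * R)) : R :=
  match l with
  | nil => 0
  | (a, b) :: l' => (b - a) + total_length l'
  end.

Definition angle_set (E : pt -> Prop) (tau t : R) : Prop :=
  - PI < t <= PI /\ E (circ tau t).

Definition arc_sums (E : pt -> Prop) (tau : R) (x : R) : Prop :=
  exists l, intervals_in (angle_set E tau) (- PI) l /\
            x = tau * total_length l.

(* L_E(tau) = H^1(E ∩ S^1_tau), for open E computed by inner regularity as
   the supremum of lengths of finite unions of disjoint closed arcs in E *)
Definition L_E (E : pt -> Prop) (tau : R) : R :=
  epsilon (inhabits 0) (fun m => is_lub (arc_sums E tau) m).

Definition pE (E : pt -> Prop) (tau : R) : Prop :=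
  0 < tau < 1 /\ L_E E tau > 0.

Definition alpha_E (E : pt -> Prop) (tau : R) : R := L_E E tau / (2 * tau).

(* C(tau, alpha) : for alpha < PI the open arc centred on the positive
   e_1 axis; for alpha = PI the full circle *)
Definition Ccap (tau alpha : R) (y : pt) : Prop :=
  pnorm y = tau /\ (alpha < PI -> fst y > tau * cos alpha).

Definition Esc (E : pt -> Prop) (y : pt) : Prop :=
  exists tau, pE E tau /\ Ccap tau (alpha_E E tau) y.

Definition normal_at (M : pt -> Prop) (x n : pt) : Prop :=
  forall eps, 0 < eps -> exists delta, 0 < delta /\
    forall y, M y -> 0 < dist y x < delta ->
      Rabs (dot (psub y x) n) <= eps * dist y x.

Definition inner_dir (E : pt -> Prop) (x n : pt) : Prop :=
  exists delta, 0 < delta /\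
    forall s, 0 < s < delta -> E (padd x (pscal s n)) /\ ~ E (psub x (pscal s n)).

Definition rot (s : R) (p : pt) : pt :=
  (cos s * fst p - sin s * snd p, sin s * fst p + cos s * snd p).

Definition convex2 (E : pt -> Prop) : Prop :=
  forall a b lam, E a -> E b -> 0 <= lam <= 1 ->
    E (padd (pscal lam a) (pscal (1 - lam) b)).

(* Since E \ {0} = E^sc and every cap C(tau, alpha) is symmetric in the e1-axis, E is
   invariant under the reflection (y1, y2) |-> (y1, -y2).  If sin sigma(x) = -1, the inner
   normal at x is x/|x|, so x + a n = (|x| + a) n lies in E for small a > 0, and so does its
   mirror image; as x is in the upper half-plane, this mirror image lies strictly on the
   outer side of the tangent line of M at x.  Because M is tangent to that line at x, E
   contains a cone with vertex x around the inner normal (a boundary point inside the cone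
   would violate the tangency).  A segment from the mirror point to a point of the cone then
   passes through x - u n for small u > 0, which is outside E: E is not convex. *)
From Pilot Require Import Defs.
From Stdlib Require Import Reals Lra Psatz Classical.
Open Scope R_scope.

Definition perp (p : pt) : pt := (- snd p, fst p).

Definition frame (x n : pt) (a b : R) : pt :=
  padd x (padd (pscal a n) (pscal b (perp n))).

Definition reflect_e1 (p : pt) : pt := (fst p, - snd p).

Lemma dot_self_ge0 p : 0 <= dot p p.
Proof. unfold dot; nra. Qed.

Lemma pnorm_ge0 p : 0 <= pnorm p.
Proof. apply sqrt_pos. Qed.

Lemma pnorm_sq p : pnorm p * pnorm p = dot p p.
Proof. apply sqrt_sqrt, dot_self_ge0. Qed.

Lemma pnorm_pos p : p <> (0, 0) -> 0 < pnorm p.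
Proof.
intros Hp; destruct p as [p1 p2]; apply sqrt_lt_R0; unfold dot; simpl.
destruct (Req_dec p1 0), (Req_dec p2 0); subst; [contradiction | nra ..].
Qed.

Lemma pnorm_le_sq p c : 0 <= c -> dot p p <= c * c -> pnorm p <= c.
Proof.
intros Hc Hp; unfold pnorm; rewrite <- (sqrt_square c) by exact Hc.
apply sqrt_le_1_alt, Hp.
Qed.

Lemma pnorm_ge_sq p c : 0 <= c -> c * c <= dot p p -> c <= pnorm p.
Proof.
intros Hc Hp; unfold pnorm; rewrite <- (sqrt_square c) by exact Hc.
apply sqrt_le_1_alt, Hp.
Qed.

Lemma pnorm_pscal s p : pnorm (pscal s p) = Rabs s * pnorm p.
Proof.
destruct p as [p1 p2]; unfold pnorm, pscal, dot; simpl.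
replace (s * p1 * (s * p1) + s * p2 * (s * p2)) with ((s * s) * (p1 * p1 + p2 * p2))
  by ring.
rewrite sqrt_mult_alt, <- sqrt_Rsqr_abs by nra; reflexivity.
Qed.

Lemma dot_le_pnorm p q : dot p q <= pnorm p * pnorm q.
Proof.
unfold pnorm; rewrite <- sqrt_mult_alt by apply dot_self_ge0.
destruct (Rle_or_lt (dot p q) 0) as [Hle | Hgt].
- pose proof (sqrt_pos (dot p p * dot q q)); lra.
- rewrite <- (sqrt_square (dot p q)) by lra.
  apply sqrt_le_1_alt; destruct p as [p1 p2], q as [q1 q2]; unfold dot; simpl.
  pose proof (Rle_0_sqr (p1 * q2 - p2 * q1)); unfold Rsqr in *; nra.
Qed.

Lemma pnorm_padd_le p q : pnorm (padd p q) <= pnorm p + pnorm q.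
Proof.
apply pnorm_le_sq; [pose proof (pnorm_ge0 p); pose proof (pnorm_ge0 q); lra |].
replace (dot (padd p q) (padd p q)) with (dot p p + 2 * dot p q + dot q q)
  by (unfold dot, padd; simpl; ring).
pose proof (dot_le_pnorm p q); rewrite <- (pnorm_sq p), <- (pnorm_sq q); nra.
Qed.

Lemma dist_sym p q : Defs.dist p q = Defs.dist q p.
Proof.
unfold Defs.dist; replace (psub p q) with (pscal (-1) (psub q p))
  by (unfold pscal, psub; simpl; f_equal; ring).
rewrite pnorm_pscal, Rabs_left by lra; ring.
Qed.

Lemma inU_open : open2 inU.
Proof.
intros p Hp; exists (1 - pnorm p); split; [unfold inU in Hp; lra |].
intros q Hq; unfold inU.
replace q with (padd p (psub q p)) by (destruct p, q; unfold padd, psub; simpl; f_equal; ring).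
pose proof (pnorm_padd_le p (psub q p)) as Htri.
change (pnorm (psub q p)) with (Defs.dist q p) in Htri; rewrite dist_sym in Htri; lra.
Qed.

Lemma dist_segment P D l m :
  Defs.dist (padd P (pscal l D)) (padd P (pscal m D)) = Rabs (l - m) * pnorm D.
Proof.
unfold Defs.dist; rewrite <- pnorm_pscal; f_equal.
destruct P, D; unfold psub, padd, pscal; simpl; f_equal; ring.
Qed.

Lemma dist_segment_lt P D l m eps :
  0 < eps -> Rabs (l - m) <= eps / (pnorm D + 1) ->
  Defs.dist (padd P (pscal l D)) (padd P (pscal m D)) < eps.
Proof.
intros Heps Hlm; rewrite dist_segment.
pose proof (pnorm_ge0 D); pose proof (Rabs_pos (l - m)).
apply Rle_lt_trans with (eps / (pnorm D + 1) * pnorm D); [apply Rmult_le_compat_r; lra |].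
apply Rmult_lt_reg_r with (pnorm D + 1); [lra |].
field_simplify; lra.
Qed.

Lemma pscal_pscal l b p : pscal l (pscal b p) = pscal (l * b) p.
Proof. destruct p; unfold pscal; simpl; f_equal; ring. Qed.

Lemma frame_segment x n a b :
  padd (frame x n a 0) (pscal b (perp n)) = frame x n a b.
Proof. destruct x, n; unfold frame, padd, pscal, perp; simpl; f_equal; ring. Qed.

Lemma frame_convex x n lam a b c d :
  padd (pscal lam (frame x n a b)) (pscal (1 - lam) (frame x n c d)) =
  frame x n (lam * a + (1 - lam) * c) (lam * b + (1 - lam) * d).
Proof. destruct x, n; unfold frame, padd, pscal, perp; simpl; f_equal; ring. Qed.

Lemma frame_normal x n a : frame x n a 0 = padd x (pscal a n).
Proof. destruct x, n; unfold frame, padd, pscal, perp; simpl; f_equal; ring. Qed.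

Lemma frame_opp_normal x n u : frame x n (- u) 0 = psub x (pscal u n).
Proof. destruct x, n; unfold frame, psub, padd, pscal, perp; simpl; f_equal; ring. Qed.

Section UnitNormal.

Variables (x n : pt).
Hypothesis n_unit : dot n n = 1.

Lemma frame_coordinates p :
  frame x n (dot (psub p x) n) (dot (psub p x) (perp n)) = p.
Proof.
destruct x as [x1 x2], n as [n1 n2], p as [p1 p2].
unfold frame, dot, padd, psub, pscal, perp in *; simpl in *; f_equal.
- transitivity (x1 + (p1 - x1) * (n1 * n1 + n2 * n2)); [ring | rewrite n_unit; ring].
- transitivity (x2 + (p2 - x2) * (n1 * n1 + n2 * n2)); [ring | rewrite n_unit; ring].
Qed.

Lemma dot_frame_normal a b : dot (psub (frame x n a b) x) n = a.
Proof.
destruct x, n as [n1 n2]; unfold frame, dot, padd, psub, pscal, perp in *; simpl in *.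
transitivity (a * (n1 * n1 + n2 * n2)); [ring | rewrite n_unit; ring].
Qed.

Lemma dot_self_frame a b :
  dot (psub (frame x n a b) x) (psub (frame x n a b) x) = a * a + b * b.
Proof.
destruct x, n as [n1 n2]; unfold frame, dot, padd, psub, pscal, perp in *; simpl in *.
transitivity ((a * a + b * b) * (n1 * n1 + n2 * n2)); [ring | rewrite n_unit; ring].
Qed.

End UnitNormal.

Lemma is_lub_approx (S : R -> Prop) L eps :
  is_lub S L -> 0 < eps -> exists l, S l /\ L - eps < l.
Proof.
intros [_ HLleast] Heps; apply NNPP; intros Hno.
assert (L <= L - eps); [| lra].
apply HLleast; intros l Hl; apply Rnot_lt_le; intros Hlt; apply Hno; eauto.
Qed.

Lemma segment_crosses_boundary (E : pt -> Prop) P D :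
  open2 E -> E P -> ~ E (padd P D) ->
  exists l, 0 <= l <= 1 /\ boundary E (padd P (pscal l D)).
Proof.
intros HE HP HPD.
set (S := fun l => 0 <= l <= 1 /\ E (padd P (pscal l D))).
assert (HS0 : S 0).
{ split; [lra |]. replace (padd P (pscal 0 D)) with P; [exact HP |].
  destruct P, D; unfold padd, pscal; simpl; f_equal; ring. }
destruct (completeness S) as [L HLsup].
{ exists 1; intros l Hl; apply Hl. }
{ exists 0; exact HS0. }
pose proof HLsup as [HLub HLleast].
assert (HL : 0 <= L <= 1).
{ split; [apply HLub, HS0 | apply HLleast; intros l Hl; apply Hl]. }
assert (HLout : ~ E (padd P (pscal L D))).
{ intros HEL; destruct (HE _ HEL) as [rho [Hrho Hball]].
  assert (HL1 : L <> 1).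
  { intros ->; apply HPD; replace (padd P D) with (padd P (pscal 1 D)); [exact HEL |].
    destruct P, D; unfold padd, pscal; simpl; f_equal; ring. }
  assert (Hstep : 0 < rho / (pnorm D + 1)).
  { pose proof (pnorm_ge0 D); apply Rdiv_lt_0_compat; lra. }
  set (l := Rmin 1 (L + rho / (pnorm D + 1))).
  assert (Hl : L < l) by (apply Rmin_glb_lt; lra).
  assert (l <= L + rho / (pnorm D + 1)) by apply Rmin_r.
  assert (l <= L); [| lra].
  apply HLub; split; [split; [lra | apply Rmin_l] |].
  apply Hball, dist_segment_lt; [lra |].
  rewrite Rabs_left1; lra. }
exists L; split; [exact HL | split].
- intros eps Heps.
  assert (Hstep : 0 < eps / (pnorm D + 1)).
  { pose proof (pnorm_ge0 D); apply Rdiv_lt_0_compat; lra. }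
  destruct (is_lub_approx S L _ HLsup Hstep) as [l [HSl Hlt]].
  exists (padd P (pscal l D)); split; [apply HSl |].
  apply dist_segment_lt; [exact Heps |].
  assert (l <= L) by (apply HLub, HSl).
  rewrite Rabs_right by lra; lra.
- intros eps Heps; exists (padd P (pscal L D)); split; [exact HLout |].
  rewrite dist_segment, Rminus_diag, Rabs_R0; lra.
Qed.

Lemma normal_at_boundary (E : pt -> Prop) x n :
  inU x -> normal_at (bdryU E) x n -> normal_at (boundary E) x n.
Proof.
intros Hx Hnormal eps Heps.
destruct (inU_open x Hx) as [rho [Hrho Hball]].
destruct (Hnormal eps Heps) as [delta [Hdelta Hsmall]].
exists (Rmin delta rho); split; [apply Rmin_glb_lt; lra |].
intros y Hy Hyx; apply Hsmall; [split; [exact Hy |] | split; [lra |]].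
- apply Hball; rewrite dist_sym.
  apply Rlt_le_trans with (Rmin delta rho); [lra | apply Rmin_r].
- apply Rlt_le_trans with (Rmin delta rho); [lra | apply Rmin_l].
Qed.

Lemma open_inner_cone (E : pt -> Prop) x n :
  open2 E -> dot n n = 1 -> normal_at (boundary E) x n -> inner_dir E x n ->
  forall K, 0 < K -> exists a1, 0 < a1 /\
    forall a b, 0 < a < a1 -> Rabs b <= K * a -> E (frame x n a b).
Proof.
intros HE Hn Hnormal [delta [Hdelta Hinner]] K HK.
assert (Heps : 0 < / (2 * (1 + K))) by (apply Rinv_0_lt_compat; lra).
destruct (Hnormal _ Heps) as [dM [HdM Hflat]].
exists (Rmin delta (dM / (1 + K))); split.
{ apply Rmin_glb_lt; [lra | apply Rdiv_lt_0_compat; lra]. }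
intros a b Ha Hb.
assert (Ha_delta : a < delta) by (apply Rlt_le_trans with (1 := proj2 Ha), Rmin_l).
assert (Ha_dM : (1 + K) * a < dM).
{ assert (a < dM / (1 + K)) by (apply Rlt_le_trans with (1 := proj2 Ha), Rmin_r).
  replace dM with ((1 + K) * (dM / (1 + K))) by (field; lra).
  apply Rmult_lt_compat_l; lra. }
apply NNPP; intros Hout.
(* The segment from x + a n to the missing point meets the boundary at a point y with
   <y - x, n> = a although |y - x| <= (1 + K) a, contradicting the tangency at x. *)
destruct (segment_crosses_boundary E (frame x n a 0) (pscal b (perp n)) HE)
  as [l [Hl Hy]].
{ rewrite frame_normal; apply (Hinner a); lra. }
{ rewrite frame_segment; exact Hout. }
rewrite pscal_pscal, frame_segment in Hy.
assert (Hlb : Rabs (l * b) <= K * a).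
{ rewrite Rabs_mult, Rabs_right by lra; pose proof (Rabs_pos b); nra. }
assert (Hlb2 : (l * b) * (l * b) <= (K * a) * (K * a)).
{ destruct (Rle_or_lt 0 (l * b));
    [rewrite Rabs_right in Hlb | rewrite Rabs_left in Hlb]; nra. }
pose proof (dot_self_frame x n Hn a (l * b)) as Hsq.
assert (Hd_ge : a <= Defs.dist (frame x n a (l * b)) x)
  by (apply pnorm_ge_sq; [lra | rewrite Hsq; nra]).
assert (Hd_le : Defs.dist (frame x n a (l * b)) x <= (1 + K) * a)
  by (apply pnorm_le_sq; [nra | rewrite Hsq; nra]).
specialize (Hflat _ Hy (conj (Rlt_le_trans _ _ _ (proj1 Ha) Hd_ge)
                             (Rle_lt_trans _ _ _ Hd_le Ha_dM))).
rewrite dot_frame_normal, Rabs_right in Hflat by (exact Hn || lra).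
assert (/ (2 * (1 + K)) * Defs.dist (frame x n a (l * b)) x <= a / 2); [| lra].
apply Rle_trans with (/ (2 * (1 + K)) * ((1 + K) * a)); [apply Rmult_le_compat_l; lra |].
right; field; lra.
Qed.

Lemma convex_cone_contains_outer_normal (E : pt -> Prop) x n W :
  convex2 E -> dot n n = 1 ->
  (forall K, 0 < K -> exists a1, 0 < a1 /\
     forall a b, 0 < a < a1 -> Rabs b <= K * a -> E (frame x n a b)) ->
  E W -> dot (psub W x) n < 0 ->
  forall delta, 0 < delta -> exists u, 0 < u < delta /\ E (psub x (pscal u n)).
Proof.
intros Hconv Hn Hcone HW HWn delta Hdelta.
set (k := - dot (psub W x) n); set (m := dot (psub W x) (perp n)).
assert (Hk : 0 < k) by (unfold k; lra).
assert (HWframe : W = frame x n (- k) m)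
  by (unfold k; rewrite Ropp_involutive; symmetry; apply frame_coordinates, Hn).
assert (HK : 0 < 2 * Rabs m / k + 1).
{ pose proof (Rabs_pos m); assert (0 <= 2 * Rabs m / k) by (apply Rle_mult_inv_pos; lra); lra. }
destruct (Hcone _ HK) as [a1 [Ha1 HZ]].
set (a := Rmin a1 delta / 2); set (mu := 2 * a / k).
assert (Ha : 0 < a) by (unfold a; apply Rdiv_lt_0_compat; [apply Rmin_glb_lt |]; lra).
assert (Ha_a1 : a < a1) by (unfold a; pose proof (Rmin_l a1 delta); lra).
assert (Ha_delta : a < delta) by (unfold a; pose proof (Rmin_r a1 delta); lra).
assert (Hmu : 0 < mu) by (unfold mu; apply Rdiv_lt_0_compat; lra).
(* Z = x + a n - mu m n^perp is chosen so that the segment [Z, W] crosses the normal line at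
   x - a / (1 + mu) n. *)
assert (HEZ : E (frame x n a (- (mu * m)))).
{ apply HZ; [lra |]. rewrite Rabs_Ropp, Rabs_mult, Rabs_right by lra.
  replace ((2 * Rabs m / k + 1) * a) with (mu * Rabs m + a) by (unfold mu; field; lra).
  lra. }
exists (a / (1 + mu)); split.
{ split; [apply Rdiv_lt_0_compat; lra |].
  apply Rle_lt_trans with a; [| lra].
  apply Rmult_le_reg_r with (1 + mu); [lra |]. field_simplify; nra. }
replace (psub x (pscal (a / (1 + mu)) n)) with
  (padd (pscal (/ (1 + mu)) (frame x n a (- (mu * m)))) (pscal (1 - / (1 + mu)) W)).
- apply Hconv; [exact HEZ | exact HW |].
  split; [left; apply Rinv_0_lt_compat; lra |].
  rewrite <- Rinv_1; apply Rinv_le_contravar; lra.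
- rewrite HWframe, frame_convex, <- frame_opp_normal; f_equal; unfold mu; field; lra.
Qed.

Lemma Esc_reflect_e1 (E : pt -> Prop) y : Esc E y -> Esc E (reflect_e1 y).
Proof.
intros [tau [Htau [Hnorm Hcap]]]; exists tau; split; [exact Htau | split; [| exact Hcap]].
rewrite <- Hnorm; destruct y; unfold pnorm, dot, reflect_e1; simpl; f_equal; ring.
Qed.

Lemma symmetrised_reflect_e1 (E : pt -> Prop) :
  (forall y, (E y /\ y <> (0, 0)) <-> Esc E y) ->
  forall y, E y -> y <> (0, 0) -> E (reflect_e1 y).
Proof.
intros Hsc y Hy Hy0; apply Hsc.
apply Esc_reflect_e1, Hsc; split; [exact Hy | exact Hy0].
Qed.

Lemma reflect_e1_outer_side r a n :
  dot n n = 1 -> 0 < snd n -> 0 < r -> 0 <= a <= r * snd n * snd n ->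
  dot (psub (reflect_e1 (pscal (r + a) n)) (pscal r n)) n < 0.
Proof.
intros Hn Hn2 Hr Ha; destruct n as [n1 n2]; unfold dot, psub, pscal, reflect_e1 in *; simpl in *.
replace (_ + _) with (a * (n1 * n1 + n2 * n2) - 2 * (r + a) * (n2 * n2)) by ring.
rewrite Hn.
assert (0 < r * (n2 * n2)) by (apply Rmult_lt_0_compat; nra).
nra.
Qed.

Lemma radial_outward_normal_not_convex (E : pt -> Prop) r n :
  open2 E -> (forall y, E y -> y <> (0, 0) -> E (reflect_e1 y)) ->
  dot n n = 1 -> 0 < snd n -> 0 < r ->
  normal_at (boundary E) (pscal r n) n -> inner_dir E (pscal r n) n ->
  ~ convex2 E.
Proof.
intros HE Hsym Hn Hn2 Hr Hnormal Hinner Hconv.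
pose proof (open_inner_cone E _ _ HE Hn Hnormal Hinner) as Hcone.
destruct Hinner as [delta [Hdelta Hinner]].
set (a := Rmin (delta / 2) (r * snd n * snd n)).
assert (Hrn : 0 < r * snd n * snd n) by (repeat apply Rmult_lt_0_compat; lra).
assert (Ha : 0 < a < delta).
{ unfold a; split; [apply Rmin_glb_lt; lra |].
  pose proof (Rmin_l (delta / 2) (r * snd n * snd n)); lra. }
assert (HP : padd (pscal r n) (pscal a n) = pscal (r + a) n)
  by (destruct n; unfold padd, pscal; simpl; f_equal; ring).
assert (HEP : E (pscal (r + a) n)) by (rewrite <- HP; apply Hinner, Ha).
assert (HEW : E (reflect_e1 (pscal (r + a) n))).
{ apply Hsym; [exact HEP |]. destruct n; unfold pscal; simpl in *.
  intros Heq; injection Heq; nra. }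
destruct (convex_cone_contains_outer_normal E _ _ _ Hconv Hn Hcone HEW
  (reflect_e1_outer_side r a n Hn Hn2 Hr (conj (Rlt_le _ _ (proj1 Ha)) (Rmin_r _ _))) _ Hdelta)
  as [u [Hu HEu]].
exact (proj2 (Hinner u Hu) HEu).
Qed.

Lemma perp_rot_sin_m1 s u : sin s = -1 -> perp (rot s u) = u.
Proof.
intros Hs; assert (Hc : cos s = 0).
{ pose proof (sin2_cos2 s) as H; rewrite Hs in H; unfold Rsqr in H; nra. }
destruct u; unfold perp, rot; simpl; rewrite Hs, Hc; f_equal; ring.
Qed.

Theorem mainTheorem6 (E : pt -> Prop) :
  (forall y, E y -> inU y) ->
  open2 E ->
  C11_curve (bdryU E) ->
  (forall y, (E y /\ y <> (0, 0)) <-> Esc E y) ->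
  forall (x : pt) (t n : pt) (sigma : R),
    bdryU E x -> x <> (0, 0) -> snd x > 0 ->
    (* t(x) unit tangent, n(x) inner unit normal, {t, n} positively oriented *)
    pnorm t = 1 -> n = (- snd t, fst t) ->
    normal_at (bdryU E) x n -> inner_dir E x n ->
    (* sigma(x): angle from the position vector x to t(x) *)
    t = rot sigma (pscal (/ pnorm x) x) ->
    sin sigma = -1 ->
    ~ convex2 E.
Proof.
intros _ HE _ Hsc x t n sigma [_ HxU] Hx0 Hx2 _ Hn Hnormal Hinner Ht Hsigma.
assert (Hr : 0 < pnorm x) by (apply pnorm_pos, Hx0).
assert (Hn_radial : n = pscal (/ pnorm x) x)
  by (rewrite Hn, Ht; apply perp_rot_sin_m1, Hsigma).
assert (Hx : x = pscal (pnorm x) n).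
{ rewrite Hn_radial; destruct x; unfold pscal; simpl; f_equal; field; lra. }
apply (radial_outward_normal_not_convex E (pnorm x) n HE).
- apply symmetrised_reflect_e1, Hsc.
- rewrite Hn_radial; unfold dot, pscal; simpl.
  transitivity (/ pnorm x * / pnorm x * dot x x); [unfold dot; ring |].
  rewrite <- pnorm_sq; field; lra.
- rewrite Hn_radial; simpl; apply Rmult_lt_0_compat; [apply Rinv_0_lt_compat |]; lra.
- exact Hr.
- rewrite <- Hx; apply normal_at_boundary; assumption.
- rewrite <- Hx; exact Hinner.
Qed.
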